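(* Let $C$ be an open cone containing no lines, with basepoint $b\in C$. The set of horofunctions of the Hilbert geometry on $C$ is $$\{\,r_{C,x}+f \;:\; x\in\partial C\setminus\{0\},\ f\in A_C(x)\,\}.$$
   Context: $V$ is a finite-dimensional real vector space. An open cone is a nonempty open convex set $T\subset V$ with $\lambda T\subseteq T$ for all $\lambda>0$ and $0\notin T$; $\partial T$ is its boundary in $V$. Write $x\le_T y$ iff $y-x\in\overline T$, $[0]_T:=\overline T\cap(-\overline T)$ (so $[0]_C=\{0\}$ when $C$ has no lines). $M_T(y/x):=\inf\{\lambda>0:y\le_T\lambda x\}$ ($y\in V,x\in T$), $F_T(y,x):=\log M_T(y/x)$, $RF_T(x,y):=F_T(y,x)$, $H_C(x,y):=F_C(x,y)+F_C(y,x)$. For $p\in\partial C\setminus\{0\}$, $r_{C,p}(x):=RF_C(x,p)-RF_C(b,p)$. For $d\in\{F_C,H_C\}$, a sequence $(x_n)$ in $C$ converges in the $d$-sense to $g$ if $d(\cdot,x_n)-d(b,x_n)\to g$ pointwise on $C$; a horofunction of $d$ is such a limit not of the form $d(\cdot,p)-d(b,p)$, $p\in C$. For $x\in\partial C\setminus\{0\}$, $A_C(x)$ is the set of Funk-geometry horofunctions ($d=F_C$) that are Funk-sense limits of sequences in $C$ converging to $x$ in the usual topology of $V$. *)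

(* V = 'rV[R]_n (any finite-dimensional real vector space is isomorphic to one). *)
From HB Require Import structures.
From mathcomp Require Import all_boot all_order all_algebra.
From mathcomp Require Import all_classical all_reals all_analysis.
Set Implicit Arguments. Unset Strict Implicit. Unset Printing Implicit Defensive.
Import Order.TTheory GRing.Theory Num.Theory.
Import numFieldNormedType.Exports.
Local Open Scope classical_set_scope.
Local Open Scope ring_scope.

Section Defs.
Variables (R : realType) (n : nat).
Notation V := 'rV[R]_n.

Definition open_cone (T : set V) : Prop :=
  [/\ T !=set0, open T,
      (forall x y (t : R), T x -> T y -> 0 <= t -> t <= 1 -> T (t *: x + (1 - t) *: y)),
      (forall x (l : R), T x -> 0 < l -> T (l *: x)) &
      ~ T 0].

Definition no_lines (T : set V) : Prop :=
  forall x d : V, d != 0 -> ~ (forall t : R, T (x + t *: d)).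

Definition bdry (T : set V) : set V := closure T `\` interior T.

Definition cone_le (T : set V) (x y : V) : Prop := closure T (y - x).

Definition M_T (T : set V) (y x : V) : R :=
  inf [set l : R | 0 < l /\ cone_le T y (l *: x)].

Definition Funk (T : set V) (y x : V) : R := ln (M_T T y x).
Definition RFunk (T : set V) (x y : V) : R := Funk T y x.
Definition Hilb (T : set V) (x y : V) : R := Funk T x y + Funk T y x.

Definition r_fun (C : set V) (b p : V) (x : V) : R := RFunk C x p - RFunk C b p.

Definition d_conv (C : set V) (d : V -> V -> R) (b : V) (u : nat -> V) (g : V -> R) : Prop :=
  (forall k, C (u k)) /\
  (forall y, C y -> (fun k => d y (u k) - d b (u k)) @ \oo --> g y).

Definition horofunction (C : set V) (d : V -> V -> R) (b : V) (g : V -> R) : Prop :=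
  (exists u, d_conv C d b u g) /\
  ~ (exists p, C p /\ forall y, C y -> g y = d y p - d b p).

Definition A_C (C : set V) (b x : V) (f : V -> R) : Prop :=
  horofunction C (Funk C) b f /\
  exists u, d_conv C (Funk C) b u f /\ u @ \oo --> x.

End Defs.

From HB Require Import structures.
From mathcomp Require Import all_boot all_order all_algebra.
From mathcomp Require Import all_classical all_reals all_analysis.
From mathcomp Require Import ring lra.
Import Order.TTheory GRing.Theory Num.Theory.
Import numFieldNormedType.Exports.
Local Open Scope classical_set_scope.
Local Open Scope ring_scope.
Set Implicit Arguments. Unset Strict Implicit. Unset Printing Implicit Defensive.

(* Write M(y/u) = exp F(y,u) for the Funk gauge.  Funk and Hilbert limits do
   not change when the sequence is rescaled, so a sequence defining a Hilbert
   horofunction g may be normalised onto the unit sphere, where a subsequence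
   converges to some x <> 0 in the closure of C.  If x were in C, g would be
   H(.,x) - H(b,x); so x is a boundary point.  M(./y) is Lipschitz in the
   numerator, hence the reversed Funk part F(u_k,.) - F(u_k,b) tends to r_{C,x}
   and g = r_{C,x} + f with f the Funk limit of the same sequence.  This f is a
   genuine horofunction: M((p+x)/u) <= M(p/u) + 2|x-u|/r M(b/u) gives
   f(p+x) <= f(p) in the limit, while F(p+x,p) > 0 >= F(p,p).  Conversely
   r_{C,x} + f is a Hilbert limit along the sequence defining f, and along the
   ray q + t x it stays below H(.,q) - H(b,q) by ln t - O(1). *)

Lemma ltr_pM_split (R : realFieldType) (a c l : R) : 0 <= a -> 0 <= c -> a * c < l ->
  exists2 l1, a < l1 & c < l / l1.
Proof.
move=> a0 c0 acl; have c1 : 0 < c + 1 by rewrite ltr_wpDl.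
pose e := (l - a * c) / (c + 1).
have e0 : 0 < e by rewrite divr_gt0 ?subr_gt0.
have ec : e * (c + 1) = l - a * c by rewrite divfK ?gt_eqF.
exists (a + e); first by rewrite ltrDl.
rewrite ltr_pdivlMr ?ltr_wpDl //.
move: ec; rewrite mulrDr mulr1 => ec; nra.
Qed.

Lemma exists_small_scale (R : numFieldType) (V : normedModType R) (v : V) (a : R) :
  0 < a -> exists2 e : R, 0 < e & `|e *: v| < a.
Proof.
move=> a0; have v1 : 0 < `|v| + 1 by rewrite ltr_wpDl.
exists (a / (`|v| + 1)); first by rewrite divr_gt0.
rewrite normrZ ger0_norm ?divr_ge0 ?ltW // mulrAC ltr_pdivrMr //.
by rewrite ltr_pM2l // ltrDl.
Qed.

Lemma expR_lnB (R : realType) (a c : R) : 0 < a -> 0 < c -> expR (ln a - ln c) = a / c.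
Proof. by move=> a0 c0; rewrite expRB !lnK ?posrE. Qed.

Lemma cvg_dist0 (R : realType) (V : normedModType R) (v : nat -> V) (x : V) :
  v k @[k --> \oo] --> x -> `|x - v k| @[k --> \oo] --> (0 : R).
Proof.
move=> vx; rewrite -(normr0 V) -(subrr x).
by apply: cvg_norm; apply: cvgB => //; exact: cvg_cst.
Qed.

Lemma cvg_subseq (T : topologicalType) (v : nat -> T) (l : T) (phi : nat -> nat) :
  (forall k, (k <= phi k)%N) -> v k @[k --> \oo] --> l -> v (phi k) @[k --> \oo] --> l.
Proof.
move=> phik vl; apply: (cvg_comp phi v _ vl) => A [N _ NA].
by exists N => // k Nk; apply/NA/(leq_trans Nk).
Qed.

Lemma cluster_cvg_subseq (R : realType) (V : normedModType R) (w : nat -> V) (x : V) :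
  cluster (w k @[k --> \oo]) x ->
  exists2 phi : nat -> nat, (forall k, (k <= phi k)%N) & w (phi k) @[k --> \oo] --> x.
Proof.
move=> wx.
have near_x N k : exists j, (N <= j)%N /\ `|x - w j| < k.+1%:R^-1.
  have tail : (w k @[k --> \oo]) [set v | exists2 j, (N <= j)%N & v = w j].
    by exists N => // j Nj; exists j.
  have k0 : 0 < (k.+1%:R : R)^-1 by rewrite invr_gt0 ltr0n.
  have [_ [[j Nj ->] xj]] := wx _ _ tail (nbhsx_ballx x _ k0).
  by exists j; split => //; move: xj; rewrite -ball_normE.
have [phi phiP] := choice (fun k => near_x k k).
exists phi => [k|]; first by case: (phiP k).
apply/cvgrPdist_lt => e e0; near=> k.
apply: lt_le_trans (phiP k).2 _.
rewrite invf_ple ?posrE ?ltr0n // ?(ltW e0) //.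
apply: le_trans (_ : k%:R <= _); last by rewrite ler_nat.
near: k; exact: nbhs_infty_ger.
Unshelve. all: end_near.
Qed.

Lemma compact_unit_sphere (R : realType) (n : nat) : compact [set v : 'rV[R]_n | `|v| = 1].
Proof.
apply: bounded_closed_compact.
  by exists 1; split; [exact: num_real | move=> M M1 v /= ->; exact: ltW].
exact: (continuous_closedP _).1 (@norm_continuous _ _) _ (@closed_eq _ 1).
Qed.

Section OpenCone.
Variables (R : realType) (n : nat) (C : set 'rV[R]_n) (b : 'rV[R]_n).
Hypotheses (oC : open_cone C) (nlC : no_lines C) (Cb : C b).
Local Notation V := 'rV[R]_n.
Local Notation M := (M_T C).
Implicit Types (x y p q u w d : V) (l r t : R).

Lemma cone_scale x l : C x -> 0 < l -> C (l *: x).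
Proof. by case: oC => _ _ _ + _; apply. Qed.

Lemma cone_neq0 x : C x -> x != 0.
Proof. by move=> Cx; apply/eqP => x0; case: oC => _ _ _ _; rewrite -x0. Qed.

Lemma cone_add x y : C x -> C y -> C (x + y).
Proof.
case: oC => _ _ convC _ _ Cx Cy.
have -> : x + y = 2 *: (2^-1 *: x + (1 - 2^-1) *: y).
  rewrite scalerDr !scalerA mulfV // (_ : 1 - 2^-1 = 2^-1 :> R); last by field.
  by rewrite mulfV // !scale1r.
apply: cone_scale => //; apply: convC => //.
by rewrite invf_le1 // ler1n.
Qed.

Lemma cone_ball x : C x -> exists2 r, 0 < r & forall y, `|x - y| < r -> C y.
Proof.
case: oC => _ openC _ _ _ Cx.
have /nbhs_ballP [r r0 xrC] : nbhs x C by move: openC; rewrite openE; apply.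
by exists r => // y xy; apply: xrC; rewrite -ball_normE.
Qed.

Lemma closure_coneP x : closure C x <-> forall e, 0 < e -> C (x + e *: b).
Proof.
split=> [clx e e0 | xC B /nbhs_ballP [r r0 xrB]].
  have [r r0 ebC] := cone_ball (cone_scale Cb e0).
  have [z [Cz xz]] := clx _ (nbhsx_ballx x r r0).
  have -> : x + e *: b = z + (e *: b + (x - z)) by rewrite addrCA subrKC addrC.
  apply: cone_add => //; apply: ebC.
  by rewrite opprD addrA subrr sub0r normrN; move: xz; rewrite -ball_normE.
have [e e0 er] := exists_small_scale b r0.
exists (x + e *: b); split; first exact: xC.
by apply: xrB; rewrite -ball_normE /ball_ /= opprD addrA subrr sub0r normrN.
Qed.

Lemma closure_cone_add x y : closure C x -> closure C y -> closure C (x + y).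
Proof.
move=> /closure_coneP clx /closure_coneP cly; apply/closure_coneP => e e0.
have -> : x + y + e *: b = (x + (e / 2) *: b) + (y + (e / 2) *: b).
  by rewrite addrACA -scalerDl -splitr.
by apply: cone_add; [apply: clx | apply: cly]; rewrite divr_gt0.
Qed.

Lemma closure_cone_scale x l : closure C x -> 0 <= l -> closure C (l *: x).
Proof.
move=> clx; rewrite le_eqVlt => /predU1P [<- | l0].
  by rewrite scale0r; apply/closure_coneP => e e0; rewrite add0r; exact: cone_scale.
move/closure_coneP: clx => clx; apply/closure_coneP => e e0.
have -> : l *: x + e *: b = l *: (x + (e / l) *: b).
  by rewrite scalerDr scalerA mulrCA mulfV ?gt_eqF // mulr1.
by apply: cone_scale => //; apply: clx; rewrite divr_gt0.
Qed.

Lemma cone_add_closure x y : C x -> closure C y -> C (x + y).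
Proof.
move=> Cx /closure_coneP cly; have [r r0 xrC] := cone_ball Cx.
have [e e0 er] := exists_small_scale b r0.
have -> : x + y = (x - e *: b) + (y + e *: b) by rewrite addrACA addNr addr0.
by apply: cone_add; [apply: xrC; rewrite opprB addrC subrK | exact: cly].
Qed.

Lemma closure_cone_no_lines x : closure C x -> closure C (- x) -> x = 0.
Proof.
move=> clx clNx; apply/eqP/negP => /negPn x0.
apply: (nlC (x := b) x0) => t; have [t0 | /ltW t0] := leP 0 t.
  exact/cone_add_closure/closure_cone_scale.
have -> : t *: x = (- t) *: (- x) by rewrite scaleNr scalerN opprK.
apply/cone_add_closure/closure_cone_scale => //.
by rewrite oppr_ge0.
Qed.

Lemma bdry_coneP x : bdry C x <-> closure C x /\ ~ C x.
Proof. by case: oC => _ /interior_id openC _ _ _; rewrite /bdry openC. Qed.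

Lemma M_T_le w d l : 0 < l -> closure C (l *: d - w) -> M w d <= l.
Proof. by move=> l0 cl; apply: ge_inf => //; exists 0 => s [/ltW]. Qed.

Lemma M_T_le_of_gt w d a : 0 <= a -> (forall l, a < l -> closure C (l *: d - w)) -> M w d <= a.
Proof.
move=> a0 cl; apply/ler_addgt0Pr => e e0.
by apply: M_T_le; [rewrite ltr_wpDl | apply: cl; rewrite ltrDl].
Qed.

Lemma cone_scale_sub_ball w d r l : 0 < r -> (forall y, `|d - y| < r -> C y) ->
  `|w| / r < l -> C (l *: d - w).
Proof.
move=> r0 drC wl; have l0 : 0 < l by apply: le_lt_trans wl; rewrite divr_ge0 // ltW.
have -> : l *: d - w = l *: (d - l^-1 *: w).
  by rewrite scalerBr scalerA mulfV ?gt_eqF // scale1r.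
apply: cone_scale => //; apply: drC.
rewrite opprB addrC subrK normrZ ger0_norm ?invr_ge0 ?ltW // mulrC.
by rewrite ltr_pdivrMr // mulrC -ltr_pdivrMr.
Qed.

Lemma M_T_ball w d r : 0 < r -> (forall y, `|d - y| < r -> C y) -> M w d <= `|w| / r.
Proof.
move=> r0 drC; apply: M_T_le_of_gt; first by rewrite divr_ge0 // ltW.
by move=> l wl; apply/subset_closure/(cone_scale_sub_ball r0 drC).
Qed.

Let has_inf_M_set w d : C d -> has_inf [set l | 0 < l /\ cone_le C w (l *: d)].
Proof.
move=> Cd; split; last by exists 0 => s [/ltW].
have [r r0 drC] := cone_ball Cd.
exists (`|w| / r + 1); split; first by rewrite ltr_wpDl // divr_ge0 // ltW.
by apply/subset_closure/(cone_scale_sub_ball r0 drC); rewrite ltrDl.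
Qed.

Lemma M_T_ge0 w d : C d -> 0 <= M w d.
Proof. by move=> /(has_inf_M_set w) [Mn0 _]; apply: (lb_le_inf Mn0) => l [/ltW]. Qed.

Lemma M_T_lb w d a : C d -> (forall l, 0 < l -> closure C (l *: d - w) -> a <= l) ->
  a <= M w d.
Proof. by move=> /(has_inf_M_set w) [Mn0 _] al; apply: (lb_le_inf Mn0) => l []; apply: al. Qed.

Lemma closure_cone_gt_M_T w d l : C d -> M w d < l -> closure C (l *: d - w).
Proof.
move=> Cd Ml; have lM0 : 0 < l - M w d by rewrite subr_gt0.
have [s [s0 cls]] := inf_adherent lM0 (has_inf_M_set w Cd); rewrite subrKC => sl.
have -> : l *: d - w = (s *: d - w) + (l - s) *: d.
  by rewrite addrAC -scalerDl subrKC.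
by apply: closure_cone_add cls (closure_cone_scale (subset_closure Cd) _); rewrite subr_ge0 ltW.
Qed.

Lemma M_T_gt0 w d : C d -> closure C w -> w != 0 -> 0 < M w d.
Proof.
move=> Cd clw w0; rewrite lt_neqAle M_T_ge0 // andbT; apply/eqP => M0.
move/eqP: w0; apply; apply: closure_cone_no_lines clw _; apply/closure_coneP => e e0.
have [r r0 brC] := cone_ball Cb.
have [s s0 sr] := exists_small_scale d r0.
have -> : - w + e *: b = e *: (b - s *: d) + ((e * s) *: d - w).
  by rewrite scalerBr scalerA addrA subrK addrC.
apply: cone_add_closure; first by apply: cone_scale => //; apply: brC; rewrite opprB addrC subrK.
by apply: closure_cone_gt_M_T => //; rewrite -M0 mulr_gt0.
Qed.

Lemma M_T_gt0_cone y u : C y -> C u -> 0 < M y u.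
Proof. by move=> Cy Cu; apply: M_T_gt0 (subset_closure Cy) (cone_neq0 Cy). Qed.

Lemma M_T_subadd w1 w2 d : C d -> M (w1 + w2) d <= M w1 d + M w2 d.
Proof.
move=> Cd; apply: M_T_le_of_gt => [|l Ml]; first by rewrite addr_ge0 ?M_T_ge0.
set e := (l - (M w1 d + M w2 d)) / 2.
have e0 : 0 < e by rewrite divr_gt0 // subr_gt0.
rewrite [l in l *: d](_ : l = (M w1 d + e) + (M w2 d + e)); last first.
  by rewrite /e addrACA -splitr subrKC.
rewrite scalerDl opprD addrACA.
by apply: closure_cone_add; apply: closure_cone_gt_M_T => //; rewrite ltrDl.
Qed.

Lemma M_T_submul w d u : C d -> C u -> M w d <= M w u * M u d.
Proof.
move=> Cd Cu; have [M1 M2] := (M_T_ge0 w Cu, M_T_ge0 u Cd).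
apply: M_T_le_of_gt => [|l Ml]; first exact: mulr_ge0 M1 M2.
have [l1 Ml1 Ml2] := ltr_pM_split M1 M2 Ml; have l10 := le_lt_trans M1 Ml1.
have -> : l *: d - w = l1 *: ((l / l1) *: d - u) + (l1 *: u - w).
  by rewrite scalerBr scalerA mulrCA mulfV ?gt_eqF // mulr1 addrA subrK.
apply: closure_cone_add; last exact: closure_cone_gt_M_T.
by apply: closure_cone_scale _ (ltW l10); exact: closure_cone_gt_M_T.
Qed.

Lemma M_T_self d : C d -> M d d <= 1.
Proof.
move=> Cd; apply: M_T_le_of_gt => // l l1.
rewrite -{2}(scale1r d) -scalerBl.
by apply: closure_cone_scale (subset_closure Cd) _; rewrite subr_ge0 ltW.
Qed.

Lemma M_T_scaler w d (s : R) : C d -> 0 < s -> M w (s *: d) = M w d / s.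
Proof.
move=> Cd s0; have Csd := cone_scale Cd s0; apply/le_anti/andP; split.
  apply: M_T_le_of_gt => [|l Ml]; first by rewrite divr_ge0 ?M_T_ge0 // ltW.
  by rewrite scalerA; apply: closure_cone_gt_M_T => //; rewrite -ltr_pdivrMr.
rewrite ler_pdivrMr // mulrC; apply: M_T_le_of_gt => [|l Ml].
  by rewrite mulr_ge0 ?M_T_ge0 // ltW.
rewrite -[l](mulfVK (lt0r_neq0 s0)) -scalerA.
by apply: closure_cone_gt_M_T => //; rewrite ltr_pdivlMr // mulrC.
Qed.

Lemma M_T_scalel w d (s : R) : C d -> 0 < s -> M (s *: w) d = s * M w d.
Proof.
move=> Cd s0; apply/le_anti/andP; split.
  apply: M_T_le_of_gt => [|l Ml]; first by rewrite mulr_ge0 ?M_T_ge0 // ltW.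
  rewrite -[l](mulfVK (lt0r_neq0 s0)) mulrC -scalerA -scalerBr.
  apply: closure_cone_scale _ (ltW s0); apply: closure_cone_gt_M_T => //.
  by rewrite ltr_pdivlMr // mulrC.
rewrite -ler_pdivlMl //; apply: M_T_le_of_gt => [|l Ml].
  by rewrite mulr_ge0 ?invr_ge0 ?M_T_ge0 // ltW.
rewrite -[w](scale1r) -(mulVf (lt0r_neq0 s0)) -scalerA -[l](mulKf (lt0r_neq0 s0)).
rewrite -scalerA -scalerBr; apply: closure_cone_scale; last by rewrite invr_ge0 ltW.
by apply: closure_cone_gt_M_T => //; rewrite -ltr_pdivrMl.
Qed.

Lemma M_T_le1D_ball w d r : C d -> 0 < r -> (forall z, `|d - z| < r -> C z) ->
  M w d <= 1 + `|w - d| / r.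
Proof.
move=> Cd r0 drC; have := M_T_subadd d (w - d) Cd; rewrite subrKC => /le_trans; apply.
exact: lerD (M_T_self Cd) (M_T_ball _ r0 drC).
Qed.

Lemma M_T_lipschitz w1 w2 d r : C d -> 0 < r -> (forall z, `|d - z| < r -> C z) ->
  `|M w1 d - M w2 d| <= `|w1 - w2| / r.
Proof.
move=> Cd r0 drC.
have le w w' : M w d <= M w' d + `|w - w'| / r.
  have := M_T_subadd w' (w - w') Cd; rewrite subrKC => /le_trans; apply.
  by rewrite lerD2l; exact: M_T_ball _ r0 drC.
have le21 := le w2 w1; rewrite distrC in le21.
by rewrite ler_distl lerBlDr; apply/andP; split; [exact: le21 | exact: le].
Qed.

Lemma Funk_triangle y z u : C y -> C z -> C u -> Funk C y u <= Funk C y z + Funk C z u.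
Proof.
move=> Cy Cz Cu; have Myz := M_T_gt0_cone Cy Cz; have Mzu := M_T_gt0_cone Cz Cu.
rewrite /Funk -(lnM Myz Mzu) (ler_ln (M_T_gt0_cone Cy Cu) (mulr_gt0 Myz Mzu)).
exact: M_T_submul.
Qed.

Lemma Funk_scaler y u (s : R) : C y -> C u -> 0 < s -> Funk C y (s *: u) = Funk C y u - ln s.
Proof.
move=> Cy Cu s0; have s0' : 0 < s^-1 by rewrite invr_gt0.
by rewrite /Funk (M_T_scaler _ Cu s0) (lnM (M_T_gt0_cone Cy Cu) s0') (lnV s0).
Qed.

Lemma Funk_scalel y u (s : R) : C y -> C u -> 0 < s -> Funk C (s *: y) u = ln s + Funk C y u.
Proof.
by move=> Cy Cu s0; rewrite /Funk (M_T_scalel _ Cu s0) (lnM s0 (M_T_gt0_cone Cy Cu)).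
Qed.

Lemma Hilb_scaler y u (s : R) : C y -> C u -> 0 < s -> Hilb C y (s *: u) = Hilb C y u.
Proof.
move=> Cy Cu s0; rewrite /Hilb (Funk_scaler Cy Cu s0) (Funk_scalel Cu Cy s0).
by rewrite addrA subrK.
Qed.

Lemma Funk_le_dist x u r : C x -> C u -> 0 < r -> (forall z, `|u - z| < r -> C z) ->
  Funk C x u <= `|x - u| / r.
Proof.
move=> Cx Cu r0 urC; have xr0 : 0 <= `|x - u| / r by rewrite divr_ge0 // ltW.
have xr1 : -1 < `|x - u| / r by apply: lt_le_trans xr0; rewrite oppr_lt0 ltr01.
apply: le_trans (le_ln1Dx xr1).
rewrite /Funk (ler_ln (M_T_gt0_cone Cx Cu) (ltr_wpDr xr0 ltr01)).
exact: M_T_le1D_ball.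
Qed.

Lemma Funk_cvgl x y (v : nat -> V) : closure C x -> x != 0 -> C y ->
  v k @[k --> \oo] --> x -> Funk C (v k) y @[k --> \oo] --> Funk C x y.
Proof.
move=> clx x0 Cy vx; have [r r0 yrC] := cone_ball Cy.
have Mv : M (v k) y @[k --> \oo] --> M x y.
  apply/cvgrPdist_le => e e0; near=> k.
  apply: le_trans (M_T_lipschitz x (v k) Cy r0 yrC) _.
  rewrite ler_pdivrMr; last exact: r0.
  near: k; exact: (cvgrPdist_le _ _).1 vx _ (mulr_gt0 e0 r0).
exact: (cvg_comp _ (@ln R) Mv (continuous_ln (M_T_gt0 Cy clx x0))).
Unshelve. all: end_near.
Qed.

Lemma Funk_cvgr x y (v : nat -> V) : C x -> C y -> (forall k, C (v k)) ->
  v k @[k --> \oo] --> x -> Funk C y (v k) @[k --> \oo] --> Funk C y x.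
Proof.
move=> Cx Cy Cv vx; have [r r0 xrC] := cone_ball Cx.
have r2 : 0 < r / 2 by rewrite divr_gt0.
apply/cvgrPdist_le => e e0; near=> k.
have near_x : `|x - v k| < r / 2 by near: k; exact: (cvgrPdist_lt _ _).1 vx _ r2.
have near_e : `|x - v k| <= e * (r / 2).
  by near: k; exact: (cvgrPdist_le _ _).1 vx _ (mulr_gt0 e0 r2).
have x_ball z : `|x - z| < r / 2 -> C z by move=> xz; apply: xrC; lra.
have v_ball z : `|v k - z| < r / 2 -> C z.
  by move=> vz; apply: xrC; have := ler_distD (v k) x z; rewrite distrC; lra.
have Fvx : Funk C (v k) x <= `|x - v k| / (r / 2).
  by rewrite distrC; exact: Funk_le_dist (Cv k) Cx r2 x_ball.
have Fxv : Funk C x (v k) <= `|x - v k| / (r / 2) by exact: Funk_le_dist Cx (Cv k) r2 v_ball.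
rewrite -ler_pdivrMr in near_e; last exact: r2.
rewrite ler_distl lerBlDr; apply/andP; split.
  apply: le_trans (Funk_triangle Cy Cx (Cv k)) _.
  by rewrite lerD2l; exact: le_trans Fxv near_e.
apply: le_trans (Funk_triangle Cy (Cv k) Cx) _.
by rewrite lerD2l; exact: le_trans Fvx near_e.
Unshelve. all: end_near.
Qed.

Lemma M_T_addr_ge x p : closure C x -> x != 0 -> C p -> 1 + M x p <= M (p + x) p.
Proof.
move=> clx x0 Cp; apply: (M_T_lb Cp) => l l0 cll.
have cl1 : closure C ((l - 1) *: p - x).
  by rewrite scalerBl scale1r -addrA -opprD.
have l1 : 1 < l.
  rewrite ltNge; apply/negP => l1; move/eqP: x0; apply.
  apply: closure_cone_no_lines clx _.
  have -> : - x = ((l - 1) *: p - x) + (1 - l) *: p.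
    by apply/rowP => i; rewrite !mxE; ring.
  by apply: closure_cone_add cl1 (closure_cone_scale (subset_closure Cp) _); rewrite subr_ge0.
by rewrite addrC -lerBrDr; apply: M_T_le cl1; rewrite subr_gt0.
Qed.

Lemma M_T_ray_ge1 x q t : ~ C x -> closure C x -> C q -> 0 < t -> 1 <= M q (q + t *: x).
Proof.
move=> nCx clx Cq t0.
apply: (M_T_lb (cone_add_closure Cq (closure_cone_scale clx (ltW t0)))) => l l0 cll.
rewrite leNgt; apply/negP => l1; apply: nCx.
have lt0 : 0 < l * t by rewrite mulr_gt0.
have -> : x = ((1 - l) / (l * t)) *: q + (l * t)^-1 *: (l *: (q + t *: x) - q).
  by apply/rowP => i; rewrite !mxE; field; rewrite (gt_eqF t0) (gt_eqF l0).
apply: cone_add_closure; first by apply: cone_scale Cq _; rewrite divr_gt0 // subr_gt0.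
by apply: closure_cone_scale cll _; rewrite invr_ge0 ltW.
Qed.

Lemma M_T_ray_le x q t : closure C x -> C q -> 0 < t -> M x (q + t *: x) <= t^-1.
Proof.
move=> clx Cq t0; apply: M_T_le_of_gt => [|l tl]; first by rewrite invr_ge0 ltW.
have l0 : 0 < l by apply: lt_trans tl; rewrite invr_gt0.
have -> : l *: (q + t *: x) - x = l *: q + (l * t - 1) *: x.
  by apply/rowP => i; rewrite !mxE; ring.
apply: closure_cone_add; first exact: closure_cone_scale (subset_closure Cq) (ltW l0).
apply: closure_cone_scale clx _; rewrite subr_ge0 -ler_pdivrMr //.
by rewrite div1r ltW.
Qed.

Lemma M_T_boundary x u r : ~ C x -> closure C x -> C u -> 0 < r ->
  (forall z, `|b - z| < r -> C z) -> M x u <= 2 / r * `|x - u| * M b u.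
Proof.
move=> nCx clx Cu r0 brC.
have d0 : 0 < `|x - u| by rewrite normr_gt0 subr_eq0; apply: contraPneq nCx => ->.
have Mb_ge : r / `|x - u| <= M b u.
  apply: (M_T_lb Cu) => l l0 cll; rewrite ler_pdivrMr // leNgt; apply/negP => lr.
  have Cc : C (b + l *: (x - u)).
    apply: brC; rewrite opprD addrA subrr sub0r normrN normrZ ger0_norm ?ltW //.
  apply: nCx; rewrite -[x](scalerK (lt0r_neq0 l0)); apply: cone_scale; last by rewrite invr_gt0.
  have -> : l *: x = (b + l *: (x - u)) + (l *: u - b) by apply/rowP => i; rewrite !mxE; ring.
  exact: cone_add_closure.
have Mx_le : M x u <= 1 + `|x - u| / r * M b u.
  have := M_T_subadd u (x - u) Cu; rewrite subrKC => /le_trans; apply.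
  apply: lerD (M_T_self Cu) _; apply: le_trans (M_T_submul _ Cu Cb) _.
  by rewrite (ler_pM2r (M_T_gt0_cone Cb Cu)); exact: M_T_ball _ r0 brC.
have one_le : 1 <= `|x - u| / r * M b u.
  rewrite mulrC -ler_pdivrMr; last exact: divr_gt0 d0 r0.
  by rewrite div1r invf_div; exact: Mb_ge.
have -> : 2 / r * `|x - u| * M b u = 2 * (`|x - u| / r * M b u) by ring.
by apply: le_trans Mx_le _; rewrite [leRHS]mulr_natl [leRHS]mulr2n lerD2r.
Qed.

Lemma Hilb_diffE y u :
  Hilb C y u - Hilb C b u = (Funk C y u - Funk C b u) + (Funk C u y - Funk C u b).
Proof. by rewrite /Hilb opprD addrACA. Qed.

Lemma cvg_r_fun x y (v : nat -> V) : closure C x -> x != 0 -> C y ->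
  v k @[k --> \oo] --> x -> Funk C (v k) y - Funk C (v k) b @[k --> \oo] --> r_fun C b x y.
Proof. by move=> clx x0 Cy vx; apply: cvgB; exact: Funk_cvgl. Qed.

Lemma Hilb_to_Funk_conv (g : V -> R) (v : nat -> V) x : closure C x -> x != 0 ->
  d_conv C (Hilb C) b v g -> v k @[k --> \oo] --> x ->
  d_conv C (Funk C) b v (fun y => g y - r_fun C b x y).
Proof.
move=> clx x0 [Cv vg] vx; split => // y Cy.
have -> : (fun k => Funk C y (v k) - Funk C b (v k)) =
    (fun k => (Hilb C y (v k) - Hilb C b (v k)) - (Funk C (v k) y - Funk C (v k) b)).
  by apply/funext => k; rewrite Hilb_diffE addrK.
by apply: cvgB; [exact: vg | exact: cvg_r_fun].
Qed.

Lemma Funk_to_Hilb_conv (f : V -> R) (u : nat -> V) x : closure C x -> x != 0 ->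
  d_conv C (Funk C) b u f -> u k @[k --> \oo] --> x ->
  d_conv C (Hilb C) b u (fun y => r_fun C b x y + f y).
Proof.
move=> clx x0 [Cu uf] ux; split => // y Cy.
have -> : (fun k => Hilb C y (u k) - Hilb C b (u k)) =
    (fun k => (Funk C (u k) y - Funk C (u k) b) + (Funk C y (u k) - Funk C b (u k))).
  by apply/funext => k; rewrite Hilb_diffE [LHS]addrC.
by apply: cvgD; [exact: cvg_r_fun | exact: uf].
Qed.

Lemma Hilb_conv_interior (g : V -> R) (v : nat -> V) x :
  d_conv C (Hilb C) b v g -> v k @[k --> \oo] --> x -> C x ->
  forall y, C y -> g y = Hilb C y x - Hilb C b x.
Proof.
move=> [Cv vg] vx Cx y Cy; apply: norm_cvg_unique (vg y Cy) _.
have Hilb_cvg z : C z -> Hilb C z (v k) @[k --> \oo] --> Hilb C z x.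
  move=> Cz; apply: cvgD; first exact: Funk_cvgr.
  exact: Funk_cvgl (subset_closure Cx) (cone_neq0 Cx) Cz vx.
exact: cvgB (Hilb_cvg y Cy) (Hilb_cvg b Cb).
Qed.

Lemma Hilb_conv_normalize (g : V -> R) (u : nat -> V) : d_conv C (Hilb C) b u g ->
  exists v x, [/\ d_conv C (Hilb C) b v g, v k @[k --> \oo] --> x, closure C x & x != 0].
Proof.
move=> [Cu ug]; pose w k := `|u k|^-1 *: u k.
have nu0 k : 0 < `|u k|^-1 by rewrite invr_gt0 normr_gt0 cone_neq0.
have Cw k : C (w k) := cone_scale (Cu k) (nu0 k).
have w1 k : `|w k| = 1.
  by rewrite normrZ ger0_norm ?(ltW (nu0 k)) // mulVf // -invr_eq0 (lt0r_neq0 (nu0 k)).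
have sphere_w : (w k @[k --> \oo]) [set z : V | `|z| = 1] by exists 0%N => // k _; exact: w1.
have [x [x1 clx]] := compact_unit_sphere _ sphere_w.
have [phi phik wx] := cluster_cvg_subseq clx.
have wg y : C y -> Hilb C y (w k) - Hilb C b (w k) @[k --> \oo] --> g y.
  move=> Cy; have -> : (fun k => Hilb C y (w k) - Hilb C b (w k)) =
      (fun k => Hilb C y (u k) - Hilb C b (u k)).
    apply/funext => k.
    by rewrite /w (Hilb_scaler Cy (Cu k) (nu0 k)) (Hilb_scaler Cb (Cu k) (nu0 k)).
  exact: ug.
exists (w \o phi), x; split.
- by split => [k|y Cy]; [exact: Cw | exact: cvg_subseq phik (wg y Cy)].
- exact: wx.
- apply: (closed_cvg _ (@closed_closure _ C) _ _ wx).
  by exists 0%N => // k _; apply/subset_closure/Cw.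
- by apply/eqP => x0; move: x1; rewrite /= x0 normr0 => /eqP; rewrite eq_sym oner_eq0.
Qed.

Lemma Funk_conv_le (f : V -> R) (u : nat -> V) y q :
  d_conv C (Funk C) b u f -> C y -> C q -> f y <= Funk C y q + f q.
Proof.
move=> [Cu uf] Cy Cq.
have lim : Funk C y q + (Funk C q (u k) - Funk C b (u k)) @[k --> \oo] --> Funk C y q + f q.
  by apply: cvgD; [exact: cvg_cst | exact: uf].
apply: ler_cvg_to (uf y Cy) lim _; apply: nearW => k.
(* Rewrites are targeted: matching a different Funk term would unfold both sides. *)
by rewrite [leRHS]addrA lerD2r; exact: Funk_triangle Cy Cq (Cu k).
Qed.

Lemma expR_FunkB y u : C y -> C u -> expR (Funk C y u - Funk C b u) = M y u / M b u.
Proof. by move=> Cy Cu; exact: expR_lnB (M_T_gt0_cone Cy Cu) (M_T_gt0_cone Cb Cu). Qed.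

Lemma Funk_boundary_not_busemann (f : V -> R) (v : nat -> V) x :
  ~ C x -> closure C x -> x != 0 -> v k @[k --> \oo] --> x -> d_conv C (Funk C) b v f ->
  ~ exists p, C p /\ forall y, C y -> f y = Funk C y p - Funk C b p.
Proof.
move=> nCx clx x0 vx [Cv vf] [p [Cp fp]].
have [r r0 brC] := cone_ball Cb.
have Cpx : C (p + x) := cone_add_closure Cp clx.
pose ratio y k := expR (Funk C y (v k) - Funk C b (v k)).
have ratio_le k : ratio (p + x) k <= ratio p k + 2 / r * `|x - v k|.
  have Mb := M_T_gt0_cone Cb (Cv k).
  rewrite /ratio [leLHS](expR_FunkB Cpx (Cv k)) [X in _ <= X + _](expR_FunkB Cp (Cv k)).
  rewrite ler_pdivrMr; last exact: Mb.
  rewrite [leRHS]mulrDl (divfK (lt0r_neq0 Mb)).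
  apply: le_trans (M_T_subadd p x (Cv k)) _; rewrite lerD2l.
  exact: M_T_boundary nCx clx (Cv k) r0 brC.
have lim_px : ratio (p + x) k @[k --> \oo] --> expR (f (p + x)).
  exact: (cvg_comp _ expR (vf _ Cpx) (@continuous_expR R _)).
have lim_p : ratio p k + 2 / r * `|x - v k| @[k --> \oo] --> expR (f p) + 2 / r * 0.
  apply: cvgD; first exact: (cvg_comp _ expR (vf _ Cp) (@continuous_expR R _)).
  by apply: cvgM; [exact: cvg_cst | exact: cvg_dist0].
have : expR (f (p + x)) <= expR (f p) + 2 / r * 0.
  by apply: ler_cvg_to lim_px lim_p _; apply: nearW.
rewrite mulr0 addr0 ler_expR (fp _ Cpx) (fp _ Cp) lerD2r => Fpx_le.
have Fpp : Funk C p p <= 0 := ln_le0 (M_T_self Cp).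
have Fpx : 0 < Funk C (p + x) p.
  apply: ln_gt0; apply: lt_le_trans (M_T_addr_ge clx x0 Cp).
  by rewrite ltrDl; exact: M_T_gt0 Cp clx x0.
by have := lt_le_trans Fpx (le_trans Fpx_le Fpp); rewrite ltxx.
Qed.

Lemma Hilb_boundary_not_busemann (f : V -> R) (u : nat -> V) x :
  ~ C x -> closure C x -> x != 0 -> d_conv C (Funk C) b u f ->
  ~ exists q, C q /\ forall y, C y -> r_fun C b x y + f y = Hilb C y q - Hilb C b q.
Proof.
move=> nCx clx x0 uf [q [Cq hq]].
(* ln t exceeds by one the constant H(b,q) - F(x,b) + f(q) of the estimate. *)
pose t := expR (Hilb C b q - Funk C x b + f q + 1).
have t0 : 0 < t := expR_gt0 _.
have ti0 : 0 < t^-1 by rewrite invr_gt0.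
pose y := q + t *: x.
have Cy : C y := cone_add_closure Cq (closure_cone_scale clx (ltW t0)).
have Fxy : Funk C x y <= - ln t.
  rewrite -(lnV t0) (ler_ln (M_T_gt0 Cy clx x0) ti0); exact: M_T_ray_le.
have Fqy : 0 <= Funk C q y := ln_ge0 (M_T_ray_ge1 nCx clx Cq t0).
have lnt : ln t = Hilb C b q - Funk C x b + f q + 1 := expRK _.
(* lra would compare distinct Funk terms by unfolding them, so abstract them first. *)
move: Fxy Fqy (Funk_conv_le uf Cy Cq) (hq _ Cy) lnt; rewrite /r_fun /RFunk /Hilb.
move: (Funk C x y) (Funk C q y) (Funk C y q) (f y) (Funk C x b) (Funk C b q) (Funk C q b).
by move: (ln t) (f q) => *; lra.
Qed.

Lemma Hilb_horofunction_decomposition (g : V -> R) : horofunction C (Hilb C) b g ->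
  exists x f, [/\ bdry C x, x != 0, A_C C b x f & forall y, C y -> g y = r_fun C b x y + f y].
Proof.
move=> [[u ug] not_busemann].
have [v [x [vg vx clx x0]]] := Hilb_conv_normalize ug.
have nCx : ~ C x.
  by move=> Cx; apply: not_busemann; exists x; split => //; exact: Hilb_conv_interior vg vx Cx.
have vf := Hilb_to_Funk_conv clx x0 vg vx.
exists x, (fun y => g y - r_fun C b x y); split => //.
- exact/bdry_coneP.
- split; last by exists v.
  by split; [exists v | exact: Funk_boundary_not_busemann nCx clx x0 vx vf].
- by move=> y _; rewrite addrC subrK.
Qed.

Lemma Hilb_horofunction_of_decomposition (g : V -> R) x f : bdry C x -> x != 0 ->
  A_C C b x f -> (forall y, C y -> g y = r_fun C b x y + f y) -> horofunction C (Hilb C) b g.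
Proof.
move=> /bdry_coneP [clx nCx] x0 [_ [u [uf ux]]] gE; split.
  have [Cu ug] := Funk_to_Hilb_conv clx x0 uf ux.
  by exists u; split => // y Cy; rewrite (gE y Cy); exact: ug.
move=> [q [Cq gq]]; apply: (Hilb_boundary_not_busemann nCx clx x0 uf).
by exists q; split => // y Cy; rewrite -(gE y Cy); exact: gq.
Qed.

End OpenCone.

Theorem mainTheorem7 (R : realType) (n : nat) (C : set 'rV[R]_n) (b : 'rV[R]_n) :
  open_cone C -> no_lines C -> C b ->
  forall g : 'rV[R]_n -> R,
    horofunction C (Hilb C) b g <->
    exists x : 'rV[R]_n, exists f : 'rV[R]_n -> R,
      [/\ bdry C x, x != 0, A_C C b x f &
          forall y, C y -> g y = r_fun C b x y + f y].
Proof.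
move=> oC nlC Cb g; split; first exact: Hilb_horofunction_decomposition.
by move=> [x [f [bx x0 Af gE]]]; exact: Hilb_horofunction_of_decomposition bx x0 Af gE.
Qed.
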